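(* Let $G=(V,E)$ be a finite, simple, connected reflective graph, and let $x\sim y$ and $x'\sim y'$ be edges. The following are equivalent: (i) $(x,y)\parallel(x',y')$; (ii) $V_x^y=V_{x'}^{y'}$ and $V_y^x=V_{y'}^{x'}$. In particular, if these conditions hold, then $d(x,z)-d(y,z)=d(x',z)-d(y',z)$ for all $z\in V$.
   Context: $d$ is the combinatorial distance. For adjacent $x\sim y$ let $V_x^y=\{v: d(v,x)<d(v,y)\}$, $V^{xy}=\{v:d(v,x)=d(v,y)\}$. A reflection from $x$ to $y$ is a graph automorphism $\phi$ with $\phi\circ\phi=\mathrm{id}$, $\phi(x)=y$, such that the edges between $V_x^y$ and $V_y^x$ are exactly $\{\{x',\phi(x')\}:x'\in V_x^y\}$ and $\phi$ fixes $V^{xy}$ pointwise. $G$ is reflective if every edge admits a reflection. For edges $x\sim y$, $x'\sim y'$ we write $(x,y)\parallel(x',y')$ if $x'\in V_x^y$ and $y'\in V_y^x$. *)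

From mathcomp Require Import all_boot all_order all_algebra.
Set Implicit Arguments. Unset Strict Implicit. Unset Printing Implicit Defensive.

Section Graph.
Variables (T : finType) (e : rel T).

Definition simple_graph : Prop := symmetric e /\ irreflexive e.

Fixpoint ball (x : T) (n : nat) : {set T} :=
  match n with
  | 0 => [set x]
  | n'.+1 => ball x n' :|: [set v | [exists u in ball x n', e u v]]
  end.

Definition gconnected : Prop := forall x y : T, connect e x y.

(* combinatorial distance: least n with y in ball x n (n <= #|T| suffices
   in a connected graph; #|T| is a junk value otherwise) *)
Definition gdist (x y : T) : nat :=
  find (fun n => y \in ball x n) (iota 0 #|T|).

Definition Vside (x y : T) : {set T} := [set v | gdist v x < gdist v y].
Definition Vmid (x y : T) : {set T} := [set v | gdist v x == gdist v y].

Definition automorphism (phi : T -> T) : Prop :=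
  bijective phi /\ forall a b, e (phi a) (phi b) = e a b.

Definition reflection (x y : T) (phi : T -> T) : Prop :=
  automorphism phi /\ (forall v, phi (phi v) = v) /\ phi x = y /\
  (forall a, a \in Vside x y -> phi a \in Vside y x) /\
  (forall a b, a \in Vside x y -> b \in Vside y x -> (e a b <-> b = phi a)) /\
  (forall v, v \in Vmid x y -> phi v = v).

Definition reflective : Prop :=
  forall x y, e x y -> exists phi, reflection x y phi.

Definition parallel (x y x' y' : T) : Prop :=
  x' \in Vside x y /\ y' \in Vside y x.

End Graph.

(* Let phi be a reflection of the edge x'y'. Its crossing edges are the pairs {a, phi a},
   so phi x = y for every edge xy with (x',y') || (x,y). Take v in V_x^y and a neighbour p
   of v on a geodesic from x; by induction p lies in V_{x'}^{y'}. If v did not, either pv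
   would be a crossing edge, so v = phi p and d(v,y) = d(p,x) < d(v,x), or v would lie in
   V^{x'y'}, so v = phi v and d(v,y) = d(v,x); both contradict v in V_x^y. Hence V_x^y is
   contained in V_{x'}^{y'}. Parallelism is symmetric, because the reflection of xy maps
   x' to y', whence d(x,y') = d(y,x') > d(x,x'); the four inclusions follow. On an edge xy
   the difference d(x,z) - d(y,z) is -1, 1 or 0 according as z lies in V_x^y, V_y^x or
   neither, so it is determined by these two sets. *)
From mathcomp Require Import all_boot all_order all_algebra.
Set Implicit Arguments. Unset Strict Implicit. Unset Printing Implicit Defensive.
Import GRing.Theory.

Section Graph.
Variables (T : finType) (e : rel T).
Hypothesis e_sym : symmetric e.
Hypothesis e_irr : irreflexive e.
Hypothesis e_conn : gconnected e.
Hypothesis e_refl : reflective e.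

Lemma ballSP x n v :
  reflect (v \in ball e x n \/ exists2 u, u \in ball e x n & e u v)
          (v \in ball e x n.+1).
Proof.
rewrite /= in_setU inE; apply: (iffP orP) => [[|/existsP[u /andP[]]]|[|[u]]].
- by left.
- by right; exists u.
- by left.
- by right; apply/existsP; exists u; apply/andP.
Qed.

Lemma ball_mono x m n : m <= n -> ball e x m \subset ball e x n.
Proof.
elim: n => [|n IH]; first by rewrite leqn0 => /eqP ->.
rewrite leq_eqVlt => /predU1P[-> //|/IH sub_mn].
by apply: subset_trans sub_mn _; rewrite subsetUl.
Qed.

Lemma ball_path x p : path e x p -> last x p \in ball e x (size p).
Proof.
elim/last_ind: p => [|p z IH]; first by rewrite set11.
rewrite rcons_path last_rcons size_rcons => /andP[/IH p_ball ez].
by apply/ballSP; right; exists (last x p).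
Qed.

Lemma ball_connect x y : y \in ball e x #|T|.-1.
Proof.
have /connectP[p xp ->] := e_conn x y.
have [q xq uniq_q _] := shortenP xp.
have size_q : size q <= #|T|.-1.
  by have := max_card (mem (x :: q)); rewrite (card_uniqP uniq_q); case: #|T|.
exact: subsetP (ball_mono x size_q) _ (ball_path xq).
Qed.

Lemma in_ball x y n : (y \in ball e x n) = (gdist e x y <= n).
Proof.
have has_ball : has (fun n => y \in ball e x n) (iota 0 #|T|).
  apply/hasP; exists #|T|.-1; last exact: ball_connect.
  by rewrite mem_iota add0n prednK ?leqnn //; apply/card_gt0P; exists x.
have lt_dist : gdist e x y < #|T|.
  by rewrite /gdist -[X in _ < X](size_iota 0) -has_find.
have y_dist : y \in ball e x (gdist e x y).
  by have := nth_find 0 has_ball; rewrite nth_iota ?add0n.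
case: leqP => [le_dn | lt_nd]; first exact: subsetP (ball_mono x le_dn) _ y_dist.
by have := before_find 0 lt_nd; rewrite nth_iota ?(ltn_trans lt_nd).
Qed.

Lemma gdist_eq0 x y : (gdist e x y == 0) = (y == x).
Proof. by rewrite -leqn0 -in_ball inE. Qed.

Lemma gdist0 x : gdist e x x = 0.
Proof. by apply/eqP; rewrite gdist_eq0. Qed.

Lemma gdist_adj x u v : e u v -> gdist e x v <= (gdist e x u).+1.
Proof.
by move=> euv; rewrite -in_ball; apply/ballSP; right; exists u; rewrite ?in_ball.
Qed.

Lemma gdist_pred x v n :
  gdist e x v = n.+1 -> exists2 u, e u v & gdist e x u = n.
Proof.
move=> xv; have := leqnn (gdist e x v); rewrite -in_ball xv.
case/ballSP=> [|[u]]; first by rewrite in_ball xv ltnn.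
rewrite in_ball => xu euv; exists u => //.
by apply/eqP; rewrite eqn_leq xu -ltnS -xv gdist_adj.
Qed.

Lemma ball_adj_sub x u n : e x u -> ball e u n \subset ball e x n.+1.
Proof.
move=> exu; elim: n => [|n IH].
  by apply/subsetP => v /set1P ->; apply/ballSP; right; exists x; rewrite ?set11.
apply/subsetP => v /ballSP[v_ball|[w w_ball ewv]]; apply/ballSP.
  by left; apply: subsetP v_ball.
by right; exists w => //; apply: subsetP w_ball.
Qed.

Lemma ball_sym x y n : y \in ball e x n -> x \in ball e y n.
Proof.
elim: n y => [|n IH] y; first by rewrite !inE eq_sym.
case/ballSP=> [/IH|[u /IH u_ball euy]]; first exact/subsetP/ball_mono.
by apply: subsetP u_ball; apply: ball_adj_sub; rewrite e_sym.
Qed.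

Lemma gdistC x y : gdist e x y = gdist e y x.
Proof.
by apply/eqP; rewrite eqn_leq -!in_ball; apply/andP; split; apply: ball_sym; rewrite in_ball.
Qed.

Lemma ball_morph (g : T -> T) a b n :
  (forall u v, e (g u) (g v) = e u v) ->
  b \in ball e a n -> g b \in ball e (g a) n.
Proof.
move=> g_edge; elim: n b => [|n IH] b; first by rewrite !inE => /eqP ->.
case/ballSP=> [/IH b_ball|[u /IH u_ball eub]]; apply/ballSP; first by left.
by right; exists (g u); rewrite ?g_edge.
Qed.

Lemma gdist_automorphism g a b :
  automorphism e g -> gdist e (g a) (g b) = gdist e a b.
Proof.
case=> [[h gK hK] g_edge].
have h_edge u v : e (h u) (h v) = e u v by rewrite -g_edge !hK.
apply/eqP; rewrite eqn_leq; apply/andP; split; rewrite -in_ball.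
  by apply: (ball_morph g_edge); rewrite in_ball.
by rewrite -{1}(gK a) -{1}(gK b); apply: (ball_morph h_edge); rewrite in_ball.
Qed.

Lemma mem_Vside_adj x y : e x y -> x \in Vside e x y.
Proof.
by move=> exy; rewrite inE gdist0 lt0n gdist_eq0; apply: contraTneq exy => ->; rewrite e_irr.
Qed.

Lemma mem_Vside_pred x y p v :
  e p v -> (gdist e p x).+1 = gdist e v x ->
  v \in Vside e x y -> p \in Vside e x y.
Proof.
rewrite !inE => epv <- lt_vxy; rewrite -ltnS; apply: leq_trans lt_vxy _.
by rewrite !(gdistC _ y) (gdist_adj y epv).
Qed.

Lemma gdist_adj_diff x y z : e x y ->
  ((gdist e x z)%:Z - (gdist e y z)%:Z =
     if z \in Vside e x y then -1 else if z \in Vside e y x then 1 else 0)%R.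
Proof.
move=> exy; have zy := gdist_adj z exy.
have zx : gdist e z x <= (gdist e z y).+1 by rewrite gdist_adj // e_sym.
rewrite !(gdistC _ z) !inE; case: ltngtP => [lt_xy|lt_yx|->]; last by rewrite subrr.
- have -> : gdist e z y = (gdist e z x).+1 by apply/eqP; rewrite eqn_leq zy lt_xy.
  by rewrite -addn1 PoszD opprD addrA subrr.
- have -> : gdist e z x = (gdist e z y).+1 by apply/eqP; rewrite eqn_leq zx lt_yx.
  by rewrite -addn1 PoszD addrAC subrr.
Qed.

Lemma parallel_sym x y x' y' : e x y -> e x' y' ->
  parallel e x y x' y' -> parallel e x' y' x y.
Proof.
move=> exy ex'y' [x'_side y'_side].
have [phi [phi_aut [phiK [phi_x [_ [phi_cross _]]]]]] := e_refl exy.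
have phi_x' : phi x' = y' by symmetry; apply/(phi_cross _ _ x'_side y'_side).
have phi_y : phi y = x by rewrite -phi_x phiK.
have phi_dist a b := gdist_automorphism a b phi_aut.
have lt_dist : gdist e x x' < gdist e y x'.
  by move: x'_side; rewrite inE !(gdistC x').
split; rewrite inE; first by rewrite -{2}phi_y -phi_x' phi_dist.
by rewrite -{1}phi_x -phi_x' phi_dist.
Qed.

Lemma Vside_sub_of_parallel x y x' y' : e x y -> e x' y' ->
  parallel e x' y' x y -> Vside e x y \subset Vside e x' y'.
Proof.
move=> exy ex'y' [x_side y_side].
have [psi [psi_aut [_ [_ [_ [psi_cross psi_mid]]]]]] := e_refl ex'y'.
have psi_x : psi x = y by symmetry; apply/(psi_cross _ _ x_side y_side).
have psi_dist a b := gdist_automorphism a b psi_aut.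
apply/subsetP => v.
elim: {v}(gdist e x v) {-2}v (erefl (gdist e x v)) => [|n IH] v xv v_side.
  by move/eqP: xv; rewrite gdist_eq0 => /eqP ->.
have [p epv xp] := gdist_pred xv.
have p_side : p \in Vside e x y.
  by apply: (mem_Vside_pred epv) => //; rewrite !(gdistC _ x) xp xv.
have p_side' := IH p xp p_side.
rewrite inE; case: (ltngtP (gdist e v x') (gdist e v y')) => [// | lt_vy'x' | eq_vx'y'].
  have v_side' : v \in Vside e y' x' by rewrite inE.
  have v_psi : v = psi p := (psi_cross _ _ p_side' v_side').1 epv.
  have vy : gdist e v y = n by rewrite v_psi -psi_x psi_dist gdistC.
  by move: v_side; rewrite inE vy gdistC xv ltnNge leqnSn.
have v_fix : psi v = v by apply: psi_mid; rewrite inE eq_vx'y'.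
by move: v_side; rewrite inE -psi_x -{2}v_fix psi_dist ltnn.
Qed.

Lemma parallel_iff_Vside_eq x y x' y' : e x y -> e x' y' ->
  parallel e x y x' y' <->
  Vside e x y = Vside e x' y' /\ Vside e y x = Vside e y' x'.
Proof.
move=> exy ex'y'; have eyx : e y x by rewrite e_sym.
have ey'x' : e y' x' by rewrite e_sym.
split=> [xy_par | [Vxy Vyx]]; last by split; rewrite ?Vxy ?Vyx mem_Vside_adj.
have x'y'_par := parallel_sym exy ex'y' xy_par.
have swap a b a' b' : parallel e a b a' b' -> parallel e b a b' a' by case.
split; apply/eqP; rewrite eqEsubset; apply/andP; split; apply: Vside_sub_of_parallel;
  by [|apply: swap].
Qed.

End Graph.

Unset Implicit Arguments.

Theorem lemma2p3 (T : finType) (e : rel T) :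
  simple_graph e -> gconnected e -> reflective e ->
  forall x y x' y' : T, e x y -> e x' y' ->
  (parallel e x y x' y' <->
     (Vside e x y = Vside e x' y' /\ Vside e y x = Vside e y' x')) /\
  (parallel e x y x' y' ->
     forall z : T, (gdist e x z)%:Z - (gdist e y z)%:Z
                   = (gdist e x' z)%:Z - (gdist e y' z)%:Z)%R.
Proof.
move=> [e_sym e_irr] e_conn e_refl x y x' y' exy ex'y'.
have par_iff := parallel_iff_Vside_eq e_sym e_irr e_conn e_refl exy ex'y'.
split=> // /par_iff[Vxy Vyx] z.
by rewrite !(gdist_adj_diff e_sym e_conn) // Vxy Vyx.
Qed.
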